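(* In Smoluchowski's discrete model (defined in the context), for every $t\ge0$ there exists $\nu_t>0$ such that $\mathbb{P}(n^{(N)}_t\le\nu_t)\to0$ as $N\to\infty$.
   Context: Smoluchowski's discrete model: fix $N\ge2$ and $(\alpha(N))$ with $\alpha(N)\to\infty$, $\alpha(N)/N\to0$. Particles are $[N]$; each unordered pair $\{i,j\}$ gets an independent exponential clock with parameter $1/N$; initially no links. When a clock rings the link is created unless one of its ends belongs at that moment to a cluster (connected component of created links) of size $\ge\alpha(N)$, in which case it is never created. Particles in clusters of size $<\alpha(N)$ are in solution; $n^{(N)}_t$ is the number of particles in solution at time $t$ divided by $N$. *)

From HB Require Import structures.
From mathcomp Require Import all_boot all_order all_algebra.
From mathcomp Require Import all_classical all_reals all_analysis.
Set Implicit Arguments. Unset Strict Implicit. Unset Printing Implicit Defensive.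
Import Order.TTheory GRing.Theory Num.Theory.
Local Open Scope classical_set_scope.
Local Open Scope ring_scope.

(* Unordered pairs {i,j} of particles of [N] = 'I_N, represented as (i,j) with i < j. *)
Definition upair (N : nat) := {p : 'I_N * 'I_N | (p.1 < p.2)%N}.

Definition linked (N : nat) (E : {set upair N}) : rel 'I_N :=
  fun x y => [exists p : upair N, (p \in E) &&
     (((val p).1 == x) && ((val p).2 == y) || ((val p).1 == y) && ((val p).2 == x))].

Definition cluster_size (N : nat) (E : {set upair N}) (x : 'I_N) : nat :=
  #|[set y | connect (linked E) x y]|.

Definition ring_step (R : realType) (N : nat) (alpha : R)
    (E : {set upair N}) (p : upair N) : {set upair N} :=
  if ((cluster_size E (val p).1)%:R < alpha) && ((cluster_size E (val p).2)%:R < alpha)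
  then p |: E else E.

(* Set of links created by time t, given the ringing times w of the clocks:
   the clocks having rung by time t are processed in chronological order. *)
Definition links_at (R : realType) (N : nat) (alpha : R) (w : upair N -> R) (t : R)
    : {set upair N} :=
  foldl (ring_step alpha) (finset.set0 : {set upair N})
    (sort (fun p q => w p <= w q) [seq p <- enum {: upair N} | w p <= t]).

(* n_t^{(N)}: fraction of particles in solution (cluster size < alpha) at time t. *)
Definition sol_frac (R : realType) (N : nat) (alpha : R) (w : upair N -> R) (t : R) : R :=
  (#|[set x | (cluster_size (links_at alpha w t) x)%:R < alpha]|)%:R / N%:R.

Definition mutually_independent d (T : measurableType d) (R : realType)
    (P : probability T R) (I : finType) (X : I -> {RV P >-> R}) : Prop :=
  forall B : I -> set R, (forall i, measurable (B i)) ->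
    P (\bigcap_(i in [set: I]) (X i @^-1` B i)) = (\prod_(i : I) P (X i @^-1` B i))%E.

From HB Require Import structures.
From mathcomp Require Import all_boot all_order all_algebra.
From mathcomp Require Import all_classical all_reals all_analysis.
From mathcomp Require Import zify ring lra.
From mathcomp Require Import measurable_realfun.
Import Order.TTheory GRing.Theory Num.Theory.
Local Open Scope classical_set_scope.
Local Open Scope ring_scope.
Set Implicit Arguments. Unset Strict Implicit. Unset Printing Implicit Defensive.

(* Call a particle isolated if none of the clocks of its N - 1 pairs has rung
   by time s := t + 1. An isolated particle is still a singleton cluster at
   time t, hence in solution once alpha > 1. Particle x is isolated with
   probability q ^ (N - 1) >= e^-s, where q = e^(-s/N); two particles share
   exactly one clock, so the isolation events of x <> y have correlation factor
   1/q = e^(s/N) -> 1. The number Z of isolated particles thus has mean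
   m >= N e^-s and second moment at most m + m^2 e^(s/N), and Chebyshev's
   inequality bounds P(n_t <= e^-s / 2) <= P(Z <= m/2) by
   4/m + 4 (e^(s/N) - 1) -> 0. *)

Definition incident (N : nat) (x : 'I_N) (p : upair N) : bool :=
  ((val p).1 == x) || ((val p).2 == x).

Lemma card_incident_le (N : nat) (x : 'I_N) :
  (#|[pred p : upair N | incident x p]| <= N)%N.
Proof.
pose other (p : upair N) : 'I_N := if (val p).1 == x then (val p).2 else (val p).1.
have other_inj : {in [pred p : upair N | incident x p] &, injective other}.
  move=> [[a b] hab] [[c e] hce]; rewrite !inE /incident /other /= => hp hq ho.
  apply: val_inj => /=.
  case: (eqVneq a x) hp ho => ax hp ho; case: (eqVneq c x) hq ho => cx hq ho;
    rewrite /= in hp hq ho.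
  - by subst.
  - by move/eqP: hq => ex; subst; move: hce hab; rewrite /=; lia.
  - by move/eqP: hp => bx; subst; move: hce hab; rewrite /=; lia.
  - by move/eqP: hp => bx; move/eqP: hq => ex; subst.
rewrite -(card_in_imset other_inj); apply: leq_trans (max_card _) _.
by rewrite card_ord.
Qed.

Lemma incident2_uniq (N : nat) (x y : 'I_N) (p q : upair N) : x != y ->
  incident x p -> incident y p -> incident x q -> incident y q -> p = q.
Proof.
move: p q => [[a b] hab] [[c e] hce]; rewrite /incident /= => xy.
move=> /orP[/eqP ax|/eqP bx] /orP[/eqP ay|/eqP b_y]
       /orP[/eqP cx|/eqP ex] /orP[/eqP cy|/eqP ey];
  subst; try by rewrite eqxx in xy.
all: apply: val_inj => //=; move: hab hce; rewrite /=; lia.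
Qed.

Lemma exists_incident2 (N : nat) (x y : 'I_N) :
  x != y -> exists p : upair N, incident x p && incident y p.
Proof.
move=> xy; case: (ltngtP x y) => h.
- by exists (exist _ (x, y) h); rewrite /incident /= !eqxx orbT.
- by exists (exist _ (y, x) h); rewrite /incident /= !eqxx orbT.
- by move: xy; rewrite (val_inj h) eqxx.
Qed.

Section links.
Context (R : realType) (N : nat) (alpha : R).

Lemma mem_foldl_ring_step (s : seq (upair N)) (E : {set upair N}) p :
  p \in foldl (ring_step alpha) E s -> (p \in E) || (p \in s).
Proof.
elim: s E => [|a s IH] E /=; first by rewrite orbF.
move=> /IH /orP[|]; last by move=> ps; rewrite in_cons ps !orbT.
rewrite /ring_step in_cons; case: ifP => _; last by move=> ->.
by rewrite in_setU1 => /orP[/eqP ->|->]; rewrite ?eqxx ?orbT.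
Qed.

Lemma links_at_rung (w : upair N -> R) (t : R) p :
  p \in links_at alpha w t -> w p <= t.
Proof.
move/mem_foldl_ring_step; rewrite finset.in_set0 mem_sort mem_filter.
by case/andP.
Qed.

Lemma cluster_size_isolated (w : upair N -> R) (t : R) (x : 'I_N) :
  (forall p, incident x p -> t < w p) -> cluster_size (links_at alpha w t) x = 1%N.
Proof.
move=> x_iso.
have unlinked y : linked (links_at alpha w t) x y = false.
  apply/negbTE/existsP => -[p /andP[/links_at_rung wp hp]].
  suff /x_iso : incident x p by rewrite ltNge wp.
  by rewrite /incident; case/orP: hp => /andP[/eqP -> /eqP ->]; rewrite eqxx ?orbT.
rewrite /cluster_size -(card1 x); apply: eq_card => y.
apply/idP/idP; rewrite !inE; last by move=> /eqP ->; exact: connect0.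
by case/connectP => -[|z s] /= => [_ ->|]; rewrite ?unlinked.
Qed.

Lemma sum_isolated_le_sol_frac (w : upair N -> R) (t : R) (iso : pred 'I_N) :
  (0 < N)%N -> 1 < alpha ->
  (forall x, iso x -> forall p, incident x p -> t < w p) ->
  \sum_x (iso x)%:R <= N%:R * sol_frac alpha w t.
Proof.
move=> N0 alpha1 iso_isolated.
rewrite /sol_frac mulrCA divff ?pnatr_eq0 -?lt0n // mulr1.
rewrite -natr_sum ler_nat -sum1_card [leqRHS]big_mkcond /=.
apply: leq_sum => x _; case: (boolP (iso x)) => // /iso_isolated x_iso.
by rewrite mem_set //= cluster_size_isolated.
Qed.

End links.

(* The solution fraction only depends on which clocks have rung by time t and
   on their relative order: finitely many comparisons of measurable functions. *)
Definition comparison_pattern (R : realType) (N : nat) (w : upair N -> R) (t : R) :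
  {ffun upair N * upair N -> bool} * {ffun upair N -> bool} :=
  ([ffun pq => w pq.1 <= w pq.2], [ffun p => w p <= t]).

Definition sol_frac_of_pattern (R : realType) (N : nat) (alpha : R)
    (pat : {ffun upair N * upair N -> bool} * {ffun upair N -> bool}) : R :=
  (#|[set x | (cluster_size (foldl (ring_step alpha) (finset.set0 : {set upair N})
     (sort (fun p q => pat.1 (p, q)) [seq p <- enum {: upair N} | pat.2 p])) x)%:R
     < alpha]|)%:R / N%:R.

Lemma sol_frac_patternE (R : realType) (N : nat) (alpha : R) (w : upair N -> R) (t : R) :
  sol_frac alpha w t = sol_frac_of_pattern alpha (comparison_pattern w t).
Proof.
rewrite /sol_frac_of_pattern.
have -> : (fun p q => (comparison_pattern w t).1 (p, q)) = (fun p q => w p <= w q).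
  by apply/funext => p; apply/funext => q; rewrite ffunE.
have -> : (fun p => (comparison_pattern w t).2 p) = (fun p => w p <= t).
  by apply/funext => p; rewrite ffunE.
by [].
Qed.

Lemma measurable_sol_frac_le (R : realType) (N : nat) (alpha : R) d (T : measurableType d)
    (w : upair N -> T -> R) (t nu : R) :
  (forall p, measurable_fun setT (w p)) ->
  measurable [set om | sol_frac alpha (fun p => w p om) t <= nu].
Proof.
move=> mw.
have mcmp (f g : T -> R) b : measurable_fun setT f -> measurable_fun setT g ->
    measurable [set om | (f om <= g om) = b].
  move=> mf mg; have := measurable_fun_ler mf mg measurableT (_ : measurable [set b]).
  by rewrite setTI; apply.
have -> : [set om | sol_frac alpha (fun p => w p om) t <= nu] =
  \bigcup_(pat in [set pat | sol_frac_of_pattern alpha pat <= nu])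
     ((\bigcap_(pq in [set: upair N * upair N])
         [set om | (w pq.1 om <= w pq.2 om) = pat.1 pq]) `&`
      (\bigcap_(p in [set: upair N]) [set om | (w p om <= t) = pat.2 p])).
  apply/seteqP; split => om /=.
  - move=> sol_le; exists (comparison_pattern (fun p => w p om) t).
      by rewrite /= -sol_frac_patternE.
    by split => [pq _|p _] /=; rewrite ffunE.
  - move=> [[r f] /= sol_le [hr hf]].
    suff pat_om : comparison_pattern (fun p => w p om) t = (r, f).
      by rewrite sol_frac_patternE pat_om.
    by congr (_, _); apply/ffunP => x; rewrite ffunE; [exact: hr | exact: hf].
apply: fin_bigcup_measurable; first exact: finite_finset.
move=> pat _; apply: measurableI.
- apply: fin_bigcap_measurable; first exact: finite_finset.
  by move=> pq _; exact: mcmp.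
- apply: fin_bigcap_measurable; first exact: finite_finset.
  by move=> p _; apply: mcmp => //; exact: measurable_cst.
Qed.

Lemma exponential_prob_itvoy (R : realType) (r s : R) : 0 < r -> 0 < s ->
  exponential_prob r `]s, +oo[ = (expR (- r * s))%:E.
Proof.
move=> r0 s0.
have mpdf : measurable_fun setT (EFin \o exponential_pdf r).
  by apply/measurable_EFinP; exact: measurable_exponential_pdf.
have pdf_ge0 x : (0 <= (exponential_pdf r x)%:E)%E.
  by rewrite lee_fin exponential_pdf_ge0 // ltW.
have splitT : [set: R] = `]-oo, s] `|` `]s, +oo[ by rewrite -setCitvl setUv.
have split_le : [set` `]-oo, s]] = `]-oo, 0%R[ `|` `[0%R, s].
  by apply: itv_bndbnd_setU; rewrite // bnd_simp ltW.
have disj_s : [disjoint `]-oo, s] & `]s, +oo[] by rewrite -setCitvl; apply/disj_setPCl.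
have disj_0 : [disjoint `]-oo, 0%R[ & `[0%R, s]].
  apply/disj_setPS => x [] /=; rewrite !in_itv /= => x0 /andP[x0' _].
  by move: x0'; rewrite leNgt x0.
have := integral_exponential_pdf r0.
rewrite splitT ge0_integral_setU //; last exact: measurable_funTS.
rewrite split_le ge0_integral_setU //; last exact: measurable_funTS.
rewrite integral0_eq; last by move=> x /=; rewrite in_itv /= => /lt0_exponential_pdf ->.
have := exponential_prob_itv0c r s0; rewrite /exponential_prob => ->; rewrite add0e.
set tail := (\int[_]_(x in _) _)%E.
have : (0 <= tail)%E by apply: integral_ge0 => x _; exact: pdf_ge0.
case: tail => [x||] //= _; rewrite -EFinB -EFinD => /eqP; rewrite eqe => /eqP tot.
by congr (_%:E); lra.
Qed.

Section second_moment.
Context d (T : measurableType d) (R : realType) (P : probability T R).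

Lemma integral_sum_indic (I : finType) (c : I -> R) (B : I -> set T) :
  (forall i, measurable (B i)) ->
  P.-integrable setT (fun om => (\sum_i c i * \1_(B i) om)%:E) /\
  (\int[P]_om (\sum_i c i * \1_(B i) om)%:E = (\sum_i c i * fine (P (B i)))%:E)%E.
Proof.
move=> mB.
have int_i i : P.-integrable setT (fun om => (c i)%:E * (\1_(B i) om)%:E)%E.
  by apply: integrableZl => //; exact: integrable_indic.
have -> : (fun om => (\sum_i c i * \1_(B i) om)%:E) =
          (fun om => \sum_i ((c i)%:E * (\1_(B i) om)%:E))%E.
  by apply/funext => om; rewrite -sumEFin; apply: eq_bigr => i _; rewrite EFinM.
split; first by apply: (integrable_sum measurableT) => i _; exact: int_i.
rewrite integral_sum //= -sumEFin; apply: eq_bigr => i _.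
rewrite integralZl //; last exact: integrable_indic.
by rewrite integral_indic // setIT EFinM fineK // fin_num_measure.
Qed.

Lemma chebyshev_sum_indic (I : finType) (A : I -> set T) (E : set T) (c m : R) :
  (forall i, measurable (A i)) -> measurable E ->
  (forall om, E om -> c <= (\sum_i \1_(A i) om - m) ^+ 2) -> 0 <= c ->
  c * fine (P E) <= \sum_i \sum_j fine (P (A i `&` A j))
                    - 2 * m * \sum_i fine (P (A i)) + m ^+ 2.
Proof.
move=> mA mE c_le c0.
pose I' := ((I * I) + (I + 'I_1))%type.
pose coef (k : I') : R :=
  match k with inl _ => 1 | inr (inl _) => - (2 * m) | inr (inr _) => m ^+ 2 end.
pose B (k : I') : set T :=
  match k with inl ij => A ij.1 `&` A ij.2 | inr (inl i) => A i | inr (inr _) => setT end.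
have mB k : measurable (B k) by case: k => [[i j]|[i|_]] //=; exact: measurableI.
have sum_sqE om : \sum_k coef k * \1_(B k) om = (\sum_i \1_(A i) om - m) ^+ 2.
  rewrite !big_sumType /= big_ord1 /= indicT mulr1.
  rewrite -(pair_big xpredT xpredT (fun i j => 1 * \1_(A i `&` A j) om)) /=.
  have -> : \sum_i \sum_j 1 * \1_(A i `&` A j) om = (\sum_i \1_(A i) om) ^+ 2 :> R.
    rewrite expr2 mulr_suml; apply: eq_bigr => i _; rewrite mulr_sumr.
    by apply: eq_bigr => j _; rewrite indicI mul1r.
  by rewrite -mulr_sumr; move: (\sum_i _) => Z; ring.
have sum_probE : \sum_k coef k * fine (P (B k)) =
    \sum_i \sum_j fine (P (A i `&` A j)) - 2 * m * \sum_i fine (P (A i)) + m ^+ 2.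
  rewrite !big_sumType /= big_ord1 /= probability_setT /= mulr1.
  rewrite -(pair_big xpredT xpredT (fun i j => 1 * fine (P (A i `&` A j)))) /=.
  under eq_bigr do under eq_bigr do rewrite mul1r.
  by rewrite -mulr_sumr mulNr addrA.
have [intE intEE] := integral_sum_indic (fun _ : 'I_1 => c) (fun _ => mE).
have [intB intBE] := integral_sum_indic coef mB.
have := le_integral measurableT intE intB.
rewrite intEE intBE lee_fin big_ord1 sum_probE; apply => om _.
rewrite lee_fin big_ord1 sum_sqE indicE.
have [Eom|nEom] := pselect (E om).
  by rewrite mem_set // mulr1; exact: c_le.
by rewrite memNset // mulr0 sqr_ge0.
Qed.

Variables (I : finType) (A : I -> set T).
Hypothesis mA : forall i, measurable (A i).
Let m := \sum_i fine (P (A i)).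

Lemma second_moment_method (E : set T) (e : R) : measurable E -> 0 < m ->
  \sum_i \sum_j fine (P (A i `&` A j)) <= m + m ^+ 2 * (1 + e) ->
  (forall om, E om -> \sum_i \1_(A i) om <= m / 2) ->
  fine (P E) <= 4 / m + 4 * e.
Proof.
move=> mE m0 sum2_le E_small.
have dev_large om : E om -> (m / 2) ^+ 2 <= (\sum_i \1_(A i) om - m) ^+ 2.
  move=> /E_small Z_le; have : 0 <= \sum_i \1_(A i) om :> R.
    by apply: sumr_ge0 => i _; rewrite indicE ler0n.
  move: (\sum_i _) Z_le => Z; nra.
have := chebyshev_sum_indic mA mE dev_large (sqr_ge0 _).
rewrite -/m => cheb.
have PE0 : 0 <= fine (P E) by apply: fine_ge0.
rewrite -(ler_pM2l (exprn_gt0 2 m0)).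
have -> : m ^+ 2 * (4 / m + 4 * e) = 4 * (m + m ^+ 2 * e).
  by field; rewrite gt_eqF.
move: cheb sum2_le; rewrite expr2; nra.
Qed.

End second_moment.

Section isolated_particles.
Context (R : realType) (N : nat) d (T : measurableType d) (P : probability T R)
  (tau : upair N -> {RV P >-> R}).
Hypothesis tau_indep : mutually_independent tau.
Hypothesis tau_exp : forall (p : upair N) (B : set R), measurable B ->
  P (tau p @^-1` B) = exponential_prob (N%:R^-1 : R) B.
Variable s : R.
Hypotheses (s_gt0 : 0 < s) (N_gt0 : (0 < N)%N).

Definition unrung (S : pred (upair N)) := [set om | forall p, S p -> s < tau p om].

Let q := expR (- s / N%:R).

Let unrung_itv (S : pred (upair N)) (p : upair N) : set R :=
  if S p then `]s, +oo[%classic else setT.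

Let unrungE S : unrung S = \bigcap_(p in [set: upair N]) (tau p @^-1` unrung_itv S p).
Proof.
apply/seteqP; split => om /=.
- move=> unrung_om p _; rewrite /unrung_itv; case: ifP => // Sp.
  by rewrite /= in_itv /= andbT; exact: unrung_om.
- by move=> om_in p Sp; have := om_in p I; rewrite /unrung_itv Sp /= in_itv /= andbT.
Qed.

Lemma measurable_unrung S : measurable (unrung S).
Proof.
rewrite unrungE; apply: fin_bigcap_measurable; first exact: finite_finset.
move=> p _; apply: measurable_funPTI.
by rewrite /unrung_itv; case: ifP.
Qed.

Lemma prob_unrung S : P (unrung S) = (\prod_p (if S p then q else 1))%:E.
Proof.
rewrite unrungE tau_indep => [|p]; last by rewrite /unrung_itv; case: ifP.
rewrite -prodEFin; apply: eq_bigr => p _; rewrite /unrung_itv; case: ifP => _.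
- rewrite tau_exp // exponential_prob_itvoy ?invr_gt0 ?ltr0n //.
  by rewrite /q mulrC mulrN mulNr.
- by rewrite preimage_setT probability_setT.
Qed.

Local Notation isolated x := (unrung (incident x)).

Lemma prob_isolated_ge x : expR (- s) <= fine (P (isolated x)).
Proof.
rewrite prob_unrung /= -big_mkcond /= prodr_const.
have q1 : q <= 1 by rewrite /q expR_le1 mulNr oppr_le0 divr_ge0 // ltW.
apply: (@le_trans _ _ (q ^+ N)); last first.
  by apply: ler_wiXn2l => //; [exact: ltW (expR_gt0 _) | exact: card_incident_le].
by rewrite /q -expRM_natl mulrCA divff ?mulr1 // pnatr_eq0 -lt0n.
Qed.

Lemma prob_isolated2 x y : x != y ->
  fine (P (isolated x `&` isolated y)) =
  fine (P (isolated x)) * fine (P (isolated y)) * expR (s / N%:R).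
Proof.
move=> xy.
have -> : isolated x `&` isolated y = unrung (fun p => incident x p || incident y p).
  apply/seteqP; split => om /=.
  - by move=> [iso_x iso_y] p /orP[]; [exact: iso_x | exact: iso_y].
  - by move=> iso_xy; split => p hp; apply: iso_xy; rewrite hp ?orbT.
rewrite !prob_unrung /= -big_split /=.
have [p0 /andP[x_p0 y_p0]] := exists_incident2 xy.
rewrite (bigD1 p0) //= [X in _ = X * _](bigD1 p0) //= x_p0 y_p0 /=.
have -> : \prod_(p | p != p0) (if incident x p || incident y p then q else 1) =
          \prod_(p | p != p0) ((if incident x p then q else 1) *
                               (if incident y p then q else 1)).
  apply: eq_bigr => p p_p0.
  case: (boolP (incident x p)) => x_p; case: (boolP (incident y p)) => y_p //=;
    rewrite ?mulr1 ?mul1r //.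
  by move: p_p0; rewrite (incident2_uniq xy x_p y_p x_p0 y_p0) eqxx.
have qV : q * expR (s / N%:R) = 1 by rewrite /q -expRD mulNr addNr expR0.
by rewrite mulrAC -(mulrA q q) qV mulr1.
Qed.

Let m := \sum_x fine (P (isolated x)).

Lemma sum_prob_isolated2_le :
  \sum_x \sum_y fine (P (isolated x `&` isolated y)) <= m + m ^+ 2 * expR (s / N%:R).
Proof.
have -> : m ^+ 2 * expR (s / N%:R) = \sum_x \sum_y
    fine (P (isolated x)) * fine (P (isolated y)) * expR (s / N%:R).
  rewrite expr2 !mulr_suml; apply: eq_bigr => x _.
  by rewrite mulr_sumr mulr_suml.
rewrite /m -big_split /=; apply: ler_sum => x _.
rewrite (bigD1 x) //= setIid [X in _ <= _ + X](bigD1 x) //= lerD2l.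
rewrite -[X in X <= _]add0r; apply: lerD.
  by rewrite !mulr_ge0 ?fine_ge0 // ltW // expR_gt0.
by apply: ler_sum => y yx; rewrite prob_isolated2 // eq_sym.
Qed.

Lemma prob_sol_frac_small (alpha t : R) : t < s -> 1 < alpha ->
  fine (P [set om | sol_frac alpha (fun p => tau p om) t <= expR (- s) / 2]) <=
  4 * expR s / N%:R + 4 * (expR (s / N%:R) - 1).
Proof.
move=> ts alpha1.
have N_pos : (0 : R) < N%:R by rewrite ltr0n.
have m_ge : N%:R * expR (- s) <= m.
  apply: le_trans (ler_sum _ (fun x _ => prob_isolated_ge x)).
  by rewrite sumr_const card_ord mulr_natl.
have m_gt0 : 0 < m by apply: lt_le_trans m_ge; rewrite mulr_gt0 // expR_gt0.
set E := [set om | _].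
have mE : measurable E.
  by apply: measurable_sol_frac_le => p; exact: measurable_funPT.
have E_small om : E om -> \sum_x \1_(isolated x) om <= m / 2.
  move=> sol_small.
  have iso_before x : om \in isolated x -> forall p, incident x p -> t < tau p om.
    by move=> /set_mem iso_x p /iso_x; exact: lt_trans.
  under eq_bigr do rewrite indicE.
  apply: le_trans (sum_isolated_le_sol_frac N_gt0 alpha1 iso_before) _.
  apply: le_trans (ler_wpM2l (ler0n _ _) sol_small) _.
  by rewrite mulrA ler_pM2r; lra.
have sum2_le : \sum_x \sum_y fine (P (isolated x `&` isolated y)) <=
    m + m ^+ 2 * (1 + (expR (s / N%:R) - 1)).
  by rewrite addrCA subrr addr0; exact: sum_prob_isolated2_le.
apply: le_trans (second_moment_method (fun x => measurable_unrung _) mE m_gt0 sum2_le E_small) _.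
rewrite lerD2r -mulrA ler_pM2l //.
have -> : expR s / N%:R = (N%:R * expR (- s))^-1 by rewrite invfM expRN invrK mulrC.
by rewrite lef_pV2 ?posrE // mulr_gt0 // expR_gt0.
Qed.

End isolated_particles.

Lemma cvg_small_sol_bound (R : realType) (s : R) :
  (fun N : nat => 4 * expR s / N%:R + 4 * (expR (s / N%:R) - 1)) @ \oo --> 0.
Proof.
have invn0 : (fun N : nat => N%:R^-1 : R) @ \oo --> 0.
  have := @cvgr_idn R; rewrite -gtr0_cvgV0 //.
  by near=> N; rewrite ltr0n; near: N; exists 1%N.
have -> : 0 = 4 * expR s * 0 + 4 * (expR (s * 0) - 1) :> R.
  by rewrite !mulr0 expR0 subrr mulr0 addr0.
apply: cvgD; first exact: cvgMl_tmp.
apply: cvgMl_tmp; apply: cvgB; last exact: cvg_cst.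
by apply: cvg_comp (cvgMl_tmp invn0) _; exact: continuous_expR.
Unshelve. all: end_near.
Qed.

Theorem lemma2p6 (R : realType) (alpha : nat -> R)
  (Halpha_oo : alpha @ \oo --> +oo)
  (Halpha_o : (fun N : nat => alpha N / N%:R) @ \oo --> 0)
  (t : R) (ht : 0 <= t) :
  exists nu : R, 0 < nu /\
  forall (d : nat -> measure_display) (T : forall N : nat, measurableType (d N))
    (P : forall N : nat, probability (T N) R)
    (tau : forall N : nat, upair N -> {RV P N >-> R}),
    (forall N : nat, (2 <= N)%N ->
       mutually_independent (tau N) /\
       (forall (p : upair N) (B : set R), measurable B ->
          P N (tau N p @^-1` B) = exponential_prob (N%:R^-1 : R) B)) ->
    (fun N : nat => P N [set om | sol_frac (alpha N) (fun p => tau N p om) t <= nu])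
      @ \oo --> 0%E.
Proof.
have s_gt0 : 0 < t + 1 by lra.
have ts : t < t + 1 by lra.
exists (expR (- (t + 1)) / 2); split; first by rewrite divr_gt0 ?expR_gt0.
move=> d T P tau tau_law.
pose bound (N : nat) := 4 * expR (t + 1) / N%:R + 4 * (expR ((t + 1) / N%:R) - 1).
apply: (@squeeze_cvge _ _ _ _ (cst 0%E) _ (EFin \o bound)); last 2 first.
- exact: cvg_cst.
- by apply: cvg_EFin (cvg_small_sol_bound (t + 1)); near=> N.
near=> N.
have N2 : (2 <= N)%N by near: N; exists 2%N.
have alpha1 : 1 < alpha N by near: N; move/cvgryPgt: Halpha_oo; apply.
have [tau_indep tau_exp] := tau_law N N2.
have mE := measurable_sol_frac_le (alpha N) t (expR (- (t + 1)) / 2)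
  (fun p => measurable_funPT (tau N p)).
rewrite measure_ge0 /= /bound -(fineK (fin_num_measure _ _ mE)) lee_fin.
exact (prob_sol_frac_small tau_indep tau_exp s_gt0 (ltnW N2) ts alpha1).
Unshelve. all: end_near.
Qed.
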